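(* Two spatial matrices of the same size $m\times n\times q$ over a field $k$ are equivalent if and only if their regular parts are equivalent.
   Context: An $m\times n\times q$ spatial matrix $\mathbb A=[a_{ijk}]$ has entries in $k$. Two spatial matrices are equivalent if $a'_{i'j'k'}=\sum_{i,j,k}a_{ijk}r_{ii'}s_{jj'}t_{kk'}$ for nonsingular matrices $R=[r_{ii'}]$ ($m\times m$), $S=[s_{jj'}]$ ($n\times n$), $T=[t_{kk'}]$ ($q\times q$). Let $r_1$ be the dimension of the span of the matrices $[a_{ijk}]_{j,k}$ ($i=1,\dots,m$), $r_2$ that of $[a_{ijk}]_{i,k}$ ($j=1,\dots,n$), $r_3$ that of $[a_{ijk}]_{i,j}$ ($k=1,\dots,q$); $\mathrm{rank}\,\mathbb A=(r_1,r_2,r_3)$. $\mathbb A$ is regular if $\mathrm{rank}\,\mathbb A=(m,n,q)$. A regular part of $\mathbb A$ is a regular $r_1\times r_2\times r_3$ spatial matrix $\mathbb A'$ such that $\mathbb A$ is equivalent to $\mathbb A'\oplus\mathbb O$, where $\mathbb O$ is the zero $(m-r_1)\times(n-r_2)\times(q-r_3)$ spatial matrix and $\oplus$ denotes the block-diagonal spatial matrix (entries outside the two diagonal blocks are zero). *)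

From mathcomp Require Import all_boot all_order all_algebra.
Set Implicit Arguments. Unset Strict Implicit. Unset Printing Implicit Defensive.
Import GRing.Theory.
Local Open Scope ring_scope.

Definition spmx (F : Type) (m n q : nat) := 'I_m -> 'I_n -> 'I_q -> F.

Section Spatial.
Variable F : fieldType.

Definition sp_equiv (m n q : nat) (A B : spmx F m n q) : Prop :=
  exists (R : 'M[F]_m) (S : 'M[F]_n) (T : 'M[F]_q),
    [/\ R \in unitmx, S \in unitmx, T \in unitmx &
      forall i' j' k',
        B i' j' k' = \sum_(i < m) \sum_(j < n) \sum_(k < q)
                        A i j k * R i i' * S j j' * T k k'].

(* The three families of slices, each slice flattened (mxvec) to a row;
   the dimension of the span of the slices is the rank of that matrix. *)
Definition slices1 m n q (A : spmx F m n q) : 'M[F]_(m, n * q) :=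
  \matrix_(i < m) mxvec (\matrix_(j < n, k < q) A i j k).
Definition slices2 m n q (A : spmx F m n q) : 'M[F]_(n, m * q) :=
  \matrix_(j < n) mxvec (\matrix_(i < m, k < q) A i j k).
Definition slices3 m n q (A : spmx F m n q) : 'M[F]_(q, m * n) :=
  \matrix_(k < q) mxvec (\matrix_(i < m, j < n) A i j k).

Definition sprank m n q (A : spmx F m n q) : nat * nat * nat :=
  (\rank (slices1 A), \rank (slices2 A), \rank (slices3 A)).

Definition sp_regular m n q (A : spmx F m n q) : Prop :=
  sprank A = (m, n, q).

Definition sp_zero m n q : spmx F m n q := fun _ _ _ => 0.

Definition sp_dsum m1 n1 q1 m2 n2 q2 (A : spmx F m1 n1 q1) (B : spmx F m2 n2 q2)
  : spmx F (m1 + m2) (n1 + n2) (q1 + q2) :=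
  fun i j k =>
    match split i, split j, split k with
    | inl i1, inl j1, inl k1 => A i1 j1 k1
    | inr i2, inr j2, inr k2 => B i2 j2 k2
    | _, _, _ => 0
    end.

Definition sp_cast m n q m' n' q' (e1 : m = m') (e2 : n = n') (e3 : q = q')
  (A : spmx F m n q) : spmx F m' n' q' :=
  fun i j k => A (cast_ord (esym e1) i) (cast_ord (esym e2) j) (cast_ord (esym e3) k).

Definition regular_part m n q r1 r2 r3 (A : spmx F m n q) (A' : spmx F r1 r2 r3)
  : Prop :=
  [/\ sprank A = (r1, r2, r3), sp_regular A' &
    exists (e1 : (r1 + (m - r1))%N = m) (e2 : (r2 + (n - r2))%N = n)
           (e3 : (r3 + (q - r3))%N = q),
      sp_equiv A (sp_cast e1 e2 e3
                    (sp_dsum A' (@sp_zero (m - r1)%N (n - r2)%N (q - r3)%N)))].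

End Spatial.

(* Equivalence preserves the three ranks, so the regular parts of equivalent
   spatial matrices have the same size, and both directions reduce to
   X (+) 0 ~ Y (+) 0 <-> X ~ Y for regular X.  If (R, S, T) realizes
   X (+) 0 ~ Y (+) 0, then after moving S and T to the other side the
   mode-1 slices of Y (+) 0 beyond r1 are combinations of the (independent)
   mode-1 slices of X with coefficients in the upper-right block of R, so that
   block vanishes; by symmetry the same holds for S and T.  The upper-left
   blocks of R, S, T are then invertible and realize X ~ Y. *)

From mathcomp Require Import all_boot all_order all_algebra.
From Stdlib Require Import FunctionalExtensionality.
Set Implicit Arguments. Unset Strict Implicit. Unset Printing Implicit Defensive.
Import GRing.Theory.
Local Open Scope ring_scope.

Section SpatialEquivalence.
Variable F : fieldType.

Lemma spmxP m n q (A B : spmx F m n q) :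
  (forall i j k, A i j k = B i j k) -> A = B.
Proof.
by move=> eqAB; do 3!apply: functional_extensionality => ?; apply: eqAB.
Qed.

Definition sp_swap m n q (A : spmx F m n q) : spmx F n m q := fun j i k => A i j k.
Definition sp_rot m n q (A : spmx F m n q) : spmx F q m n := fun k i j => A i j k.

Definition sp_mul1 m n q (R : 'M[F]_m) (A : spmx F m n q) : spmx F m n q :=
  fun i' j k => \sum_(i < m) A i j k * R i i'.

(* Modes 2 and 3 are mode 1 conjugated by a permutation of the axes; all the
   identities between mode products below then hold up to conversion. *)
Definition sp_mul2 m n q (S : 'M[F]_n) (A : spmx F m n q) : spmx F m n q :=
  sp_swap (sp_mul1 S (sp_swap A)).
Definition sp_mul3 m n q (T : 'M[F]_q) (A : spmx F m n q) : spmx F m n q :=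
  sp_rot (sp_rot (sp_mul1 T (sp_rot A))).

Lemma sp_mul1M m n q (R1 R2 : 'M[F]_m) (A : spmx F m n q) :
  sp_mul1 R2 (sp_mul1 R1 A) = sp_mul1 (R1 *m R2) A.
Proof.
apply: spmxP => i' j k; rewrite /sp_mul1.
under eq_bigr do rewrite mulr_suml.
rewrite exchange_big; apply: eq_bigr => i _; rewrite mxE mulr_sumr.
by apply: eq_bigr => l _; rewrite mulrA.
Qed.

Lemma sp_mul1_1 m n q (A : spmx F m n q) : sp_mul1 1%:M A = A.
Proof.
apply: spmxP => i' j k; rewrite /sp_mul1 (bigD1 i') //= mxE eqxx mulr1.
by rewrite big1 ?addr0 // => i /negbTE ne_ii'; rewrite mxE ne_ii' mulr0.
Qed.

Lemma sp_mul12C m n q (R : 'M[F]_m) (S : 'M[F]_n) (A : spmx F m n q) :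
  sp_mul1 R (sp_mul2 S A) = sp_mul2 S (sp_mul1 R A).
Proof.
apply: spmxP => i' j' k; rewrite /sp_mul1 /= /sp_swap /=.
under eq_bigr do rewrite mulr_suml.
rewrite exchange_big; apply: eq_bigr => j _; rewrite mulr_suml.
by apply: eq_bigr => i _; rewrite mulrAC.
Qed.

Lemma sp_mul2M m n q (S1 S2 : 'M[F]_n) (A : spmx F m n q) :
  sp_mul2 S2 (sp_mul2 S1 A) = sp_mul2 (S1 *m S2) A.
Proof. by rewrite /sp_mul2 -sp_mul1M. Qed.

Lemma sp_mul3M m n q (T1 T2 : 'M[F]_q) (A : spmx F m n q) :
  sp_mul3 T2 (sp_mul3 T1 A) = sp_mul3 (T1 *m T2) A.
Proof. by rewrite /sp_mul3 -sp_mul1M. Qed.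

Lemma sp_mul2_1 m n q (A : spmx F m n q) : sp_mul2 1%:M A = A.
Proof. by rewrite /sp_mul2 sp_mul1_1. Qed.

Lemma sp_mul3_1 m n q (A : spmx F m n q) : sp_mul3 1%:M A = A.
Proof. by rewrite /sp_mul3 sp_mul1_1. Qed.

Lemma sp_mul13C m n q (R : 'M[F]_m) (T : 'M[F]_q) (A : spmx F m n q) :
  sp_mul1 R (sp_mul3 T A) = sp_mul3 T (sp_mul1 R A).
Proof. exact: esym (congr1 (fun X => sp_rot (sp_rot X)) (sp_mul12C T R (sp_rot A))). Qed.

Lemma sp_mul23C m n q (S : 'M[F]_n) (T : 'M[F]_q) (A : spmx F m n q) :
  sp_mul2 S (sp_mul3 T A) = sp_mul3 T (sp_mul2 S A).
Proof. exact: (congr1 (@sp_swap _ _ _) (sp_mul13C S T (sp_swap A))). Qed.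

Definition sp_mul m n q (R : 'M[F]_m) (S : 'M[F]_n) (T : 'M[F]_q) (A : spmx F m n q)
  : spmx F m n q := sp_mul1 R (sp_mul2 S (sp_mul3 T A)).

Lemma sp_mulE m n q R S T (A : spmx F m n q) i' j' k' :
  sp_mul R S T A i' j' k' = \sum_(i < m) \sum_(j < n) \sum_(k < q)
                               A i j k * R i i' * S j j' * T k k'.
Proof.
apply: eq_bigr => i _; rewrite mulr_suml; apply: eq_bigr => j _.
rewrite !mulr_suml; apply: eq_bigr => k _.
by rewrite mulrAC -(mulrA _ (T k k')) (mulrC (T k k')) !mulrA mulrAC.
Qed.

Lemma sp_mulM m n q R1 S1 T1 R2 S2 T2 (A : spmx F m n q) :
  sp_mul R2 S2 T2 (sp_mul R1 S1 T1 A) = sp_mul (R1 *m R2) (S1 *m S2) (T1 *m T2) A.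
Proof.
by rewrite /sp_mul -sp_mul13C -sp_mul23C sp_mul3M -sp_mul12C sp_mul2M sp_mul1M.
Qed.

Lemma sp_mul_1 m n q (A : spmx F m n q) : sp_mul 1%:M 1%:M 1%:M A = A.
Proof. by rewrite /sp_mul sp_mul3_1 sp_mul2_1 sp_mul1_1. Qed.

Lemma sp_equivP m n q (A B : spmx F m n q) : sp_equiv A B <->
  exists R S T, [/\ R \in unitmx, S \in unitmx, T \in unitmx & B = sp_mul R S T A].
Proof.
split=> -[R [S [T [uR uS uT eqB]]]]; exists R, S, T; split=> //.
  by apply: spmxP => i j k; rewrite sp_mulE.
by move=> i j k; rewrite eqB sp_mulE.
Qed.

Lemma sp_equiv_trans m n q (A B C : spmx F m n q) :
  sp_equiv A B -> sp_equiv B C -> sp_equiv A C.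
Proof.
move=> /sp_equivP[R [S [T [uR uS uT ->]]]] /sp_equivP[R' [S' [T' [uR' uS' uT' ->]]]].
apply/sp_equivP; exists (R *m R'), (S *m S'), (T *m T').
by rewrite sp_mulM !unitmx_mul uR uS uT uR' uS' uT'.
Qed.

Lemma sp_equiv_sym m n q (A B : spmx F m n q) : sp_equiv A B -> sp_equiv B A.
Proof.
move=> /sp_equivP[R [S [T [uR uS uT ->]]]].
apply/sp_equivP; exists (invmx R), (invmx S), (invmx T).
by rewrite sp_mulM !mulmxV // sp_mul_1 !unitmx_inv.
Qed.

Lemma sp_equiv_iff m n q (A A' B B' : spmx F m n q) :
  sp_equiv A A' -> sp_equiv B B' -> sp_equiv A B <-> sp_equiv A' B'.
Proof.
move=> eqA eqB; split=> [eqAB | eqAB'].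
  exact: sp_equiv_trans (sp_equiv_trans (sp_equiv_sym eqA) eqAB) eqB.
exact: sp_equiv_trans (sp_equiv_trans eqA eqAB') (sp_equiv_sym eqB).
Qed.

Lemma sp_swap_mul m n q R S T (A : spmx F m n q) :
  sp_swap (sp_mul R S T A) = sp_mul S R T (sp_swap A).
Proof. by rewrite /sp_mul [RHS]sp_mul12C. Qed.

Lemma sp_rot_mul m n q R S T (A : spmx F m n q) :
  sp_rot (sp_mul R S T A) = sp_mul T R S (sp_rot A).
Proof. by rewrite /sp_mul [RHS]sp_mul12C [sp_mul1 T _]sp_mul13C. Qed.

Lemma sp_equiv_swap m n q (A B : spmx F m n q) :
  sp_equiv A B -> sp_equiv (sp_swap A) (sp_swap B).
Proof.
move=> /sp_equivP[R [S [T [uR uS uT ->]]]].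
by apply/sp_equivP; exists S, R, T; rewrite sp_swap_mul.
Qed.

Lemma sp_equiv_rot m n q (A B : spmx F m n q) :
  sp_equiv A B -> sp_equiv (sp_rot A) (sp_rot B).
Proof.
move=> /sp_equivP[R [S [T [uR uS uT ->]]]].
by apply/sp_equivP; exists T, R, S; rewrite sp_rot_mul.
Qed.

Lemma slices1_mul1 m n q R (A : spmx F m n q) :
  slices1 (sp_mul1 R A) = R^T *m slices1 A.
Proof.
apply/matrixP => i' v; case/mxvec_indexP: v => j k.
rewrite !mxE mxvecE mxE; apply: eq_bigr => i _.
by rewrite !mxE mxvecE mxE mulrC.
Qed.

Lemma slices1_mul2 m n q S (A : spmx F m n q) :
  slices1 (sp_mul2 S A) = slices1 A *m lin_mx (mulmx S^T).
Proof.
apply/row_matrixP => i; rewrite row_mul !rowK mul_vec_lin; congr mxvec.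
apply/matrixP => j' k; rewrite !mxE; apply: eq_bigr => j _.
by rewrite !mxE mulrC.
Qed.

Lemma slices1_mul3 m n q T (A : spmx F m n q) :
  slices1 (sp_mul3 T A) = slices1 A *m lin_mx (mulmxr T).
Proof.
apply/row_matrixP => i; rewrite row_mul !rowK mul_vec_lin; congr mxvec.
by apply/matrixP => j k'; rewrite !mxE; apply: eq_bigr => k _; rewrite !mxE.
Qed.

Lemma rank_slices1_mul m n q R S T (A : spmx F m n q) :
  (\rank (slices1 (sp_mul R S T A)) <= \rank (slices1 A))%N.
Proof.
rewrite slices1_mul1 (leq_trans (mxrankM_maxr _ _)) // slices1_mul2.
by rewrite (leq_trans (mxrankM_maxl _ _)) // slices1_mul3 mxrankM_maxl.
Qed.

Lemma rank_slices1_equiv m n q (A B : spmx F m n q) :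
  sp_equiv A B -> \rank (slices1 A) = \rank (slices1 B).
Proof.
have rank_le (X Y : spmx F m n q) : sp_equiv X Y -> (\rank (slices1 Y) <= \rank (slices1 X))%N.
  by case/sp_equivP=> R [S [T [_ _ _ ->]]]; apply: rank_slices1_mul.
by move=> eqAB; apply/eqP; rewrite eqn_leq !rank_le //; apply: sp_equiv_sym.
Qed.

Lemma sprank_equiv m n q (A B : spmx F m n q) :
  sp_equiv A B -> sprank A = sprank B.
Proof.
move=> eqAB; rewrite /sprank (rank_slices1_equiv eqAB).
rewrite (rank_slices1_equiv (sp_equiv_swap eqAB)).
by rewrite (rank_slices1_equiv (sp_equiv_rot eqAB)).
Qed.

Lemma split_lshift a b (i : 'I_a) : split (lshift b i) = inl i.
Proof. exact: (unsplitK (inl i)). Qed.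

Lemma split_rshift a b (i : 'I_b) : split (rshift a i) = inr i.
Proof. exact: (unsplitK (inr i)). Qed.

Section ZeroPadding.
Variables r1 r2 r3 p1 p2 p3 : nat.
Local Notation pad X := (sp_dsum X (@sp_zero F p1 p2 p3)).

Lemma sp_dsum0_lshift (X : spmx F r1 r2 r3) i j k :
  pad X (lshift p1 i) (lshift p2 j) (lshift p3 k) = X i j k.
Proof. by rewrite /sp_dsum !split_lshift. Qed.

Lemma sp_dsum0_rshift1 (X : spmx F r1 r2 r3) i j k : pad X (rshift r1 i) j k = 0.
Proof. by rewrite /sp_dsum split_rshift; case: (split j) => ?; case: (split k). Qed.

Lemma sp_dsum0_rshift2 (X : spmx F r1 r2 r3) i j k : pad X i (rshift r2 j) k = 0.
Proof. by rewrite /sp_dsum split_rshift; case: (split i) => ?; case: (split k). Qed.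

Lemma sp_dsum0_rshift3 (X : spmx F r1 r2 r3) i j k : pad X i j (rshift r3 k) = 0.
Proof. by rewrite /sp_dsum split_rshift; case: (split i) => ?; case: (split j). Qed.

Lemma sp_dsum0_inj (X Y : spmx F r1 r2 r3) : pad X = pad Y -> X = Y.
Proof.
move=> eqXY; apply: spmxP => i j k.
by rewrite -[LHS]sp_dsum0_lshift -sp_dsum0_lshift eqXY.
Qed.

Lemma sp_mul1_dsum0 (R : 'M[F]_(r1 + p1)) (X : spmx F r1 r2 r3) :
  ursubmx R = 0 -> sp_mul1 R (pad X) = pad (sp_mul1 (ulsubmx R) X).
Proof.
move=> urR0; apply: spmxP => i' j k; rewrite /sp_mul1 big_split_ord /=.
rewrite [X in _ + X]big1 ?addr0 => [|i _]; last by rewrite sp_dsum0_rshift1 mul0r.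
case: (split_ordP i') => i0 ->.
- case: (split_ordP j) => j0 ->; last first.
    by rewrite sp_dsum0_rshift2 big1 // => i _; rewrite sp_dsum0_rshift2 mul0r.
  case: (split_ordP k) => k0 ->; last first.
    by rewrite sp_dsum0_rshift3 big1 // => i _; rewrite sp_dsum0_rshift3 mul0r.
  by rewrite sp_dsum0_lshift; apply: eq_bigr => i _; rewrite sp_dsum0_lshift !mxE.
- rewrite sp_dsum0_rshift1 big1 // => i _.
  have := congr1 (fun M : 'M_(r1, p1) => M i i0) urR0.
  by rewrite !mxE => ->; rewrite mulr0.
Qed.

End ZeroPadding.

Lemma sp_swap_dsum0 r1 r2 r3 p1 p2 p3 (X : spmx F r1 r2 r3) :
  sp_swap (sp_dsum X (@sp_zero F p1 p2 p3)) = sp_dsum (sp_swap X) (@sp_zero F p2 p1 p3).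
Proof.
apply: spmxP => j i k.
by rewrite /sp_swap /sp_dsum; case: (split i) => ?; case: (split j) => ?; case: (split k).
Qed.

Lemma sp_rot_dsum0 r1 r2 r3 p1 p2 p3 (X : spmx F r1 r2 r3) :
  sp_rot (sp_dsum X (@sp_zero F p1 p2 p3)) = sp_dsum (sp_rot X) (@sp_zero F p3 p1 p2).
Proof.
apply: spmxP => k i j.
by rewrite /sp_rot /sp_dsum; case: (split i) => ?; case: (split j) => ?; case: (split k).
Qed.

Lemma sp_mul2_dsum0 r1 r2 r3 p1 p2 p3 (S : 'M[F]_(r2 + p2)) (X : spmx F r1 r2 r3) :
  ursubmx S = 0 -> sp_mul2 S (sp_dsum X (@sp_zero F p1 p2 p3)) =
                   sp_dsum (sp_mul2 (ulsubmx S) X) (@sp_zero F p1 p2 p3).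
Proof. by move=> urS0; rewrite /sp_mul2 sp_swap_dsum0 sp_mul1_dsum0 // sp_swap_dsum0. Qed.

Lemma sp_mul3_dsum0 r1 r2 r3 p1 p2 p3 (T : 'M[F]_(r3 + p3)) (X : spmx F r1 r2 r3) :
  ursubmx T = 0 -> sp_mul3 T (sp_dsum X (@sp_zero F p1 p2 p3)) =
                   sp_dsum (sp_mul3 (ulsubmx T) X) (@sp_zero F p1 p2 p3).
Proof. by move=> urT0; rewrite /sp_mul3 sp_rot_dsum0 sp_mul1_dsum0 // !sp_rot_dsum0. Qed.

Lemma sp_mul_dsum0 r1 r2 r3 p1 p2 p3 R S T (X : spmx F r1 r2 r3) :
  ursubmx R = 0 -> ursubmx S = 0 -> ursubmx T = 0 ->
  sp_mul R S T (sp_dsum X (@sp_zero F p1 p2 p3)) =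
  sp_dsum (sp_mul (ulsubmx R) (ulsubmx S) (ulsubmx T) X) (@sp_zero F p1 p2 p3).
Proof.
by move=> urR0 urS0 urT0; rewrite /sp_mul sp_mul3_dsum0 // sp_mul2_dsum0 // sp_mul1_dsum0.
Qed.

Lemma row_free_slices1_eq0 m n q (X : spmx F m n q) (c : 'rV[F]_m) :
  row_free (slices1 X) -> (forall j k, \sum_i c 0 i * X i j k = 0) -> c = 0.
Proof.
move=> freeX c0; apply/eqP; rewrite -(mulmx_free_eq0 _ freeX).
apply/eqP/matrixP => z v; case/mxvec_indexP: v => j k.
rewrite ord1 !mxE -[RHS](c0 j k); apply: eq_bigr => i _.
by rewrite !mxE mxvecE mxE.
Qed.

Lemma ursubmx_eq0_dsum0 r1 r2 r3 p1 p2 p3 R S T (X Y : spmx F r1 r2 r3) :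
  row_free (slices1 X) -> S \in unitmx -> T \in unitmx ->
  sp_mul R S T (sp_dsum X (@sp_zero F p1 p2 p3)) = sp_dsum Y (@sp_zero F p1 p2 p3) ->
  ursubmx R = 0.
Proof.
move=> freeX uS uT eqXY.
have := congr1 (sp_mul 1%:M (invmx S) (invmx T)) eqXY.
rewrite sp_mulM mulmx1 !mulmxV // /sp_mul sp_mul3_1 sp_mul2_1 sp_mul1_1 => mul1E.
apply/matrixP => i i''; rewrite !mxE.
pose c := \row_i R (lshift p1 i) (rshift r1 i'').
suff /rowP/(_ i) : c = 0 by rewrite !mxE.
apply: (row_free_slices1_eq0 freeX) => j k.
have := congr1 (fun Z => Z (rshift r1 i'') (lshift p2 j) (lshift p3 k)) mul1E.
rewrite /= {1}/sp_mul1 big_split_ord /= [X in _ + X]big1 ?addr0 => [|i' _]; last first.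
  by rewrite sp_dsum0_rshift1 mul0r.
rewrite /sp_mul2 /sp_mul3 /sp_swap /sp_rot /sp_mul1 [RHS]big1 => [sum0|j' _]; last first.
  by rewrite big1 ?mul0r // => k' _; rewrite sp_dsum0_rshift1 mul0r.
apply: etrans sum0; apply: eq_bigr => i' _.
by rewrite sp_dsum0_lshift mxE mulrC.
Qed.

Lemma unitmx_ulsubmx a b (R : 'M[F]_(a + b)) :
  R \in unitmx -> ursubmx R = 0 -> ulsubmx R \in unitmx.
Proof.
move=> uR urR0; move: uR.
by rewrite -{1}[R]submxK urR0 !unitmxE det_lblock unitrM => /andP[].
Qed.

Lemma sp_equiv_dsum0 r1 r2 r3 p1 p2 p3 (X Y : spmx F r1 r2 r3) :
  sp_regular X ->
  sp_equiv (sp_dsum X (@sp_zero F p1 p2 p3)) (sp_dsum Y (@sp_zero F p1 p2 p3)) <->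
  sp_equiv X Y.
Proof.
rewrite /sp_regular /sprank => -[rk1 rk2 rk3]; split; last first.
  move=> /sp_equivP[R [S [T [uR uS uT ->]]]]; apply/sp_equivP.
  exists (block_mx R 0 0 1%:M), (block_mx S 0 0 1%:M), (block_mx T 0 0 1%:M).
  by rewrite !block_diag_mx_unit uR uS uT !unitmx1 sp_mul_dsum0 ?block_mxKur // !block_mxKul.
move=> /sp_equivP[R [S [T [uR uS uT eqY]]]].
have urR0 : ursubmx R = 0.
  by apply: ursubmx_eq0_dsum0 uS uT (esym eqY); apply/eqP.
have urS0 : ursubmx S = 0.
  have := congr1 (@sp_swap _ _ _) eqY; rewrite sp_swap_mul !sp_swap_dsum0 => eqY'.
  by apply: ursubmx_eq0_dsum0 _ uR uT (esym eqY'); apply/eqP.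
have urT0 : ursubmx T = 0.
  have := congr1 (@sp_rot _ _ _) eqY; rewrite sp_rot_mul !sp_rot_dsum0 => eqY'.
  by apply: ursubmx_eq0_dsum0 _ uR uS (esym eqY'); apply/eqP.
apply/sp_equivP; exists (ulsubmx R), (ulsubmx S), (ulsubmx T).
rewrite !unitmx_ulsubmx //; split=> //.
by apply: (sp_dsum0_inj (p1 := p1) (p2 := p2) (p3 := p3)); rewrite eqY sp_mul_dsum0.
Qed.

Lemma sp_cast_id m n q (e1 : m = m) (e2 : n = n) (e3 : q = q) (X : spmx F m n q) :
  sp_cast e1 e2 e3 X = X.
Proof. by apply: spmxP => i j k; rewrite /sp_cast !cast_ord_id. Qed.

Lemma sp_equiv_cast m n q m' n' q' (e1 : m = m') (e2 : n = n') (e3 : q = q')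
  (X Y : spmx F m n q) :
  sp_equiv (sp_cast e1 e2 e3 X) (sp_cast e1 e2 e3 Y) <-> sp_equiv X Y.
Proof. by case: m' / e1; case: n' / e2; case: q' / e3; rewrite !sp_cast_id. Qed.

Lemma regular_part_equiv m n q r1 r2 r3 (A B : spmx F m n q) (A' B' : spmx F r1 r2 r3) :
  regular_part A A' -> regular_part B B' -> sp_equiv A B <-> sp_equiv A' B'.
Proof.
move=> [_ regA' [e1 [e2 [e3 eqA]]]] [_ _ [f1 [f2 [f3 eqB]]]].
rewrite (eq_irrelevance f1 e1) (eq_irrelevance f2 e2) (eq_irrelevance f3 e3) in eqB.
apply: iff_trans (sp_equiv_iff eqA eqB) _.
apply: iff_trans (sp_equiv_cast e1 e2 e3 _ _) _.
exact: sp_equiv_dsum0.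
Qed.

End SpatialEquivalence.

Theorem lemma4p2 (F : fieldType) (m n q : nat) (A B : spmx F m n q)
  (r1 r2 r3 : nat) (A' : spmx F r1 r2 r3)
  (s1 s2 s3 : nat) (B' : spmx F s1 s2 s3) :
  regular_part A A' -> regular_part B B' ->
  (sp_equiv A B <->
   exists (e1 : r1 = s1) (e2 : r2 = s2) (e3 : r3 = s3),
     sp_equiv (sp_cast e1 e2 e3 A') B').
Proof.
move=> partA partB; split=> [eqAB | [e1 [e2 [e3 eqAB']]]].
  have [er1 er2 er3] : (r1, r2, r3) = (s1, s2, s3).
    by case: partA partB => <- _ _ [<- _ _]; apply: sprank_equiv.
  subst s1 s2 s3; exists erefl, erefl, erefl.
  by rewrite sp_cast_id; apply/(regular_part_equiv partA partB).
subst s1 s2 s3.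
by rewrite sp_cast_id in eqAB'; apply/(regular_part_equiv partA partB).
Qed.
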